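(* Let $X\ge 0$ be a random variable with an absolutely continuous distribution $P_X$ whose ordinary moments $\mu_n=\mathbb{E}[X^n]$ are finite for all $n\in\mathbb{N}$, and suppose that for some $q_0\in(0,1]$ $$\limsup_{n\to\infty}\frac{\ln\mu_n}{n^2}=\frac{\ln(1/q_0)}{2}.$$ Then $P_X$ is $q$-moment determinate for every $q\in(0,q_0)$. In particular, if $\limsup_{n\to\infty}\frac{\ln\mu_n}{n^2}=0$, then $P_X$ is $q$-moment determinate for every $q\in(0,1)$.
   Context: For $0<q<1$: the Jackson $q$-integral is $\int_0^a g(t)\,d_qt=a(1-q)\sum_{j=0}^\infty g(aq^j)q^j$ for $a>0$, and $\int_0^\infty g(t)\,d_qt=(1-q)\sum_{j\in\mathbb{Z}}g(q^j)q^j$. A function $f$ on $(0,\infty)$ is a $q$-density of $X$ (with distribution function $F_X$) if $F_X(x)=\int_0^x f(t)\,d_qt$ for all $x>0$; for a non-negative $X$ with $F_X$ continuous at $0$ (in particular for absolutely continuous $P_X$) a $q$-density exists, namely $f(t)=\frac{F_X(t)-F_X(qt)}{t(1-q)}$. The $n$-th $q$-moment is $m_q(n;X)=\int_0^\infty t^nf(t)\,d_qt=(1-q)\sum_{j\in\mathbb{Z}}q^{j(n+1)}f(q^j)$. Write $f\sim g$ iff $f(q^j)=g(q^j)$ for all $j\in\mathbb{Z}$. $P_X$ (with $q$-density $f$ and finite $q$-moments of all orders) is $q$-moment determinate if every random variable $Y$ with $q$-density $g$ and $m_q(k;Y)=m_q(k;X)$ for all $k\in\mathbb{N}_0$ satisfies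 $f\sim g$. *)

From Stdlib Require Import Reals ZArith Lra.
Open Scope R_scope.

(* A (law of a) real random variable is represented by its distribution
   function F_X(x) = P(X <= x). *)
Definition is_cdf (F : R -> R) : Prop :=
  (forall x y, x <= y -> F x <= F y) /\
  (forall x eps, 0 < eps -> exists d, 0 < d /\
      forall y, x <= y < x + d -> Rabs (F y - F x) < eps) /\
  (forall eps, 0 < eps -> exists M, forall x, x <= M -> Rabs (F x) < eps) /\
  (forall eps, 0 < eps -> exists M, forall x, M <= x -> Rabs (F x - 1) < eps).

Definition nonneg_cdf (F : R -> R) : Prop := forall x, x < 0 -> F x = 0.

Fixpoint rsum (f : nat -> R) (k : nat) : R :=
  match k with O => 0 | S k' => rsum f k' + f k' end.

(* P_X absolutely continuous w.r.t. Lebesgue measure, i.e. F_X is an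
   absolutely continuous function on R. *)
Definition abs_cont_cdf (F : R -> R) : Prop :=
  forall eps, 0 < eps -> exists delta, 0 < delta /\
    forall (k : nat) (a b : nat -> R),
      (forall i, (i < k)%nat -> a i < b i) ->
      (forall i, (S i < k)%nat -> b i <= a (S i)) ->
      rsum (fun i => b i - a i) k < delta ->
      rsum (fun i => Rabs (F (b i) - F (a i))) k < eps.

(* ordinary moment mu_n = E[X^n] for n >= 1 and X >= 0, via
   E[X^n] = int_0^oo n x^(n-1) (1 - F(x)) dx (improper Riemann integral). *)
Definition is_moment (F : R -> R) (n : nat) (mu : R) : Prop :=
  exists pr : forall b, Riemann_integrable
                 (fun x => INR n * x ^ (n - 1) * (1 - F x)) 0 b,
    forall eps, 0 < eps -> exists B, forall b, B <= b ->
      Rabs (RiemannInt (pr b) - mu) < eps.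

Definition is_limsup (u : nat -> R) (L : R) : Prop :=
  forall eps, 0 < eps ->
    (exists N, forall n, (N <= n)%nat -> u n < L + eps) /\
    (forall N, exists n, (N <= n)%nat /\ L - eps < u n).

Definition jackson0 (q : R) (g : R -> R) (a s : R) : Prop :=
  infinite_sum (fun j => a * (1 - q) * g (a * q ^ j) * q ^ j) s.

Definition q_density (q : R) (F f : R -> R) : Prop :=
  forall x, 0 < x -> jackson0 q f x (F x).

Definition sumZ (h : Z -> R) (s : R) : Prop :=
  exists s1 s2,
    infinite_sum (fun k => h (Z.of_nat k)) s1 /\
    infinite_sum (fun k => h (- Z.of_nat k - 1)%Z) s2 /\ s = s1 + s2.

Definition q_moment (q : R) (f : R -> R) (n : nat) (m : R) : Prop :=
  sumZ (fun j => (1 - q) * powerRZ q (j * Z.of_nat (S n)) * f (powerRZ q j)) m.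

Definition qeq (q : R) (f g : R -> R) : Prop :=
  forall j : Z, f (powerRZ q j) = g (powerRZ q j).

Definition q_moment_determinate (q : R) (F : R -> R) : Prop :=
  exists f, q_density q F f /\
    (forall n, exists m, q_moment q f n m) /\
    forall (G g : R -> R), is_cdf G -> q_density q G g ->
      (forall k, exists m, q_moment q f k m /\ q_moment q g k m) ->
      qeq q f g.

From Stdlib Require Import Reals ZArith Lra Lia List.
Open Scope R_scope.

(* Work on the lattice t_j = q^j (j in Z).  The natural q-density of F is
   determined by the cell masses F(t_j) - F(q t_j), and the n-th q-moment of
   any q-density is the bilateral series sum_j t_j^n (F(t_j) - F(q t_j)).

   1. Bilateral series: algebra, partial sums, isolating one term.
   2. Polynomials and the q-Pochhammer polynomials qpoch q L u =
      prod_{l=1..L} (1 - u q^l), with their vanishing, lower and Gaussian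
      upper bounds.
   3. [lattice_uniqueness]: a family d on Z with vanishing moments
      sum_j t_j^n d_j, absolutely summable, and with |d_j| t_j^m <=
      K exp(gam m^2) for some gam < -ln q / 2, is zero.  One tests d against
      x^n qpoch q L (x / t_i), whose roots kill all nodes between t_i and
      t_(i-L) and whose Gaussian decay beats the growth of d beyond them.
   4. Distribution functions: the difference-quotient q-density and the
      expression of q-moments through cell masses.
   5. With r = 1/q, the n-th q-moment of F is at most
      1 + r^n + r^(2n) mu_n / (n (r - 1)), comparing the cells (r^k, r^(k+1)]
      with the tail integral int_0^oo n x^(n-1) (1 - F x) dx = mu_n.
   6. The limsup hypothesis turns this into growth exp((a/2 + 2 eps) n^2)
      with a = ln(1/q0) < ln(1/q), so the criterion of step 3 applies to the
      difference of the cell masses of two laws with equal q-moments. *)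

Lemma Un_cv_ext (u v : nat -> R) l : (forall n, u n = v n) -> Un_cv u l -> Un_cv v l.
Proof.
  intros E H eps Heps; destruct (H eps Heps) as [N HN].
  exists N; intros n Hn; rewrite <- E; auto.
Qed.

Lemma Un_cv_const (c : R) : Un_cv (fun _ => c) c.
Proof.
  intros eps Heps; exists 0%nat; intros n _; unfold Rdist.
  rewrite Rminus_diag, Rabs_R0; lra.
Qed.

Lemma cv_le_bound (u : nat -> R) s T N0 :
  Un_cv u s -> (forall N, (N0 <= N)%nat -> u N <= T) -> s <= T.
Proof.
  intros Hu HT. apply (Rle_cv_lim (Un := fun N => u (N + N0)%nat) (Vn := fun _ => T)).
  - intros N; apply HT; lia.
  - intros eps Heps; destruct (Hu eps Heps) as [N HN]; exists N; intros n Hn; apply HN; lia.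
  - apply Un_cv_const.
Qed.

Lemma isum_ext (a b : nat -> R) l :
  (forall n, a n = b n) -> infinite_sum a l -> infinite_sum b l.
Proof.
  intros E H; apply (Un_cv_ext (sum_f_R0 a)); auto.
  intros n; apply sum_eq; auto.
Qed.

Lemma isum_plus a b l1 l2 : infinite_sum a l1 -> infinite_sum b l2 ->
  infinite_sum (fun k => a k + b k) (l1 + l2).
Proof.
  intros H1 H2; apply (Un_cv_ext (fun N => sum_f_R0 a N + sum_f_R0 b N)).
  - intros; now rewrite plus_sum.
  - now apply CV_plus.
Qed.

Lemma isum_scal a l c : infinite_sum a l -> infinite_sum (fun k => c * a k) (c * l).
Proof.
  intros H; apply (Un_cv_ext (fun N => c * sum_f_R0 a N)).
  - intros N; rewrite scal_sum; apply sum_eq; intros; ring.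
  - apply CV_mult; [apply Un_cv_const | exact H].
Qed.

Lemma isum_shift (s : nat -> R) l l' :
  infinite_sum s l -> infinite_sum (fun j => s (S j)) l' -> l = s 0%nat + l'.
Proof.
  intros H1 H2; apply (uniqueness_sum s); auto.
  intros eps Heps; destruct (H2 eps Heps) as [N HN]; exists (S N); intros [|n] Hn; [lia|].
  rewrite decomp_sum by lia; unfold Rdist; simpl pred.
  replace (s 0%nat + sum_f_R0 (fun i => s (S i)) n - (s 0%nat + l'))
    with (sum_f_R0 (fun i => s (S i)) n - l') by ring.
  apply HN; lia.
Qed.

Lemma nonneg_series_cv (a : nat -> R) M :
  (forall k, 0 <= a k) -> (forall N, sum_f_R0 a N <= M) ->
  exists l, infinite_sum a l /\ l <= M.
Proof.
  intros H0 HM; destruct (growing_cv (sum_f_R0 a)) as [l Hl].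
  - intros n; simpl; pose proof (H0 (S n)); lra.
  - exists M; intros x [i ->]; auto.
  - exists l; split; auto; apply (cv_le_bound _ _ _ 0%nat Hl); auto.
Qed.

Lemma telescope (g : nat -> R) N :
  sum_f_R0 (fun k => g k - g (S k)) N = g 0%nat - g (S N).
Proof. induction N as [|N IH]; simpl; [ring|]. rewrite IH; ring. Qed.

Definition partialZ (h : Z -> R) (N : nat) : R :=
  sum_f_R0 (fun k => h (Z.of_nat k)) N + sum_f_R0 (fun k => h (- Z.of_nat k - 1)%Z) N.

Lemma sumZ_ext h1 h2 s : (forall j, h1 j = h2 j) -> sumZ h1 s -> sumZ h2 s.
Proof.
  intros E (s1 & s2 & H1 & H2 & ->); exists s1, s2; repeat split;
    eapply isum_ext; eauto; intros; simpl; auto.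
Qed.

Lemma sumZ_plus h1 h2 s t : sumZ h1 s -> sumZ h2 t -> sumZ (fun j => h1 j + h2 j) (s + t).
Proof.
  intros (s1 & s2 & H1 & H2 & ->) (t1 & t2 & G1 & G2 & ->).
  exists (s1 + t1), (s2 + t2); repeat split; [apply isum_plus; auto | apply isum_plus; auto | ring].
Qed.

Lemma sumZ_scal h s c : sumZ h s -> sumZ (fun j => c * h j) (c * s).
Proof.
  intros (s1 & s2 & H1 & H2 & ->).
  exists (c * s1), (c * s2); repeat split; [apply isum_scal; auto | apply isum_scal; auto | ring].
Qed.

Lemma sumZ_unique h s t : sumZ h s -> sumZ h t -> s = t.
Proof.
  intros (s1 & s2 & H1 & H2 & ->) (t1 & t2 & G1 & G2 & ->).
  now rewrite (uniqueness_sum _ _ _ H1 G1), (uniqueness_sum _ _ _ H2 G2).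
Qed.

Lemma sumZ_zero : sumZ (fun _ => 0) 0.
Proof.
  exists 0, 0; repeat split; try lra; apply (Un_cv_ext (fun _ => 0)), Un_cv_const;
    intros; rewrite sum_cte; ring.
Qed.

Lemma sumZ_cv h s : sumZ h s -> Un_cv (partialZ h) s.
Proof. intros (s1 & s2 & H1 & H2 & ->); now apply CV_plus. Qed.

Lemma partialZ_ext h1 h2 N : (forall j, h1 j = h2 j) -> partialZ h1 N = partialZ h2 N.
Proof. intros H; unfold partialZ; f_equal; apply sum_eq; intros; apply H. Qed.

Lemma partialZ_le h1 h2 N : (forall j, h1 j <= h2 j) -> partialZ h1 N <= partialZ h2 N.
Proof. intros H; unfold partialZ; apply Rplus_le_compat; apply sum_Rle; intros; apply H. Qed.

Lemma partialZ_abs h N : Rabs (partialZ h N) <= partialZ (fun j => Rabs (h j)) N.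
Proof.
  unfold partialZ; eapply Rle_trans; [apply Rabs_triang|].
  apply Rplus_le_compat; apply sum_f_R0_triangle.
Qed.

Lemma partialZ_plus h1 h2 N : partialZ (fun j => h1 j + h2 j) N = partialZ h1 N + partialZ h2 N.
Proof. unfold partialZ; rewrite !plus_sum; ring. Qed.

Lemma partialZ_scal h c N : partialZ (fun j => c * h j) N = c * partialZ h N.
Proof.
  unfold partialZ; rewrite Rmult_plus_distr_l, !scal_sum.
  f_equal; apply sum_eq; intros; ring.
Qed.

Lemma partialZ_nonneg h N : (forall j, 0 <= h j) -> 0 <= partialZ h N.
Proof.
  intros H; apply Rle_trans with (partialZ (fun _ => 0) N).
  - unfold partialZ; rewrite !sum_cte; lra.
  - now apply partialZ_le.
Qed.

(* The index j occurs in partialZ _ N as soon as N >= zindex j;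
   [zdrop e i] is [e] with the i-th term replaced by 0. *)
Definition zindex (i : Z) : nat := Z.to_nat (Z.max i (- i - 1)).
Definition zdrop (e : Z -> R) (i : Z) : Z -> R := fun j => if Z.eq_dec j i then 0 else e j.

Lemma sum_drop (a a' : nat -> R) k0 N :
  (forall k, k <> k0 -> a k = a' k) -> (k0 <= N)%nat ->
  sum_f_R0 a N = sum_f_R0 a' N + (a k0 - a' k0).
Proof.
  intros E; induction N as [|N IH]; intros Hk.
  - assert (k0 = 0%nat) by lia; subst; simpl; ring.
  - destruct (Nat.eq_dec k0 (S N)) as [->|Hne]; simpl.
    + rewrite (sum_eq a a'); [ring|]. intros; apply E; lia.
    + rewrite IH, (E (S N)) by lia; ring.
Qed.

Lemma partialZ_drop e i N :
  (zindex i <= N)%nat -> partialZ e N = partialZ (zdrop e i) N + e i.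
Proof.
  intros Hi; unfold partialZ, zdrop, zindex in *.
  (* each half of partialZ enumerates indices injectively; exactly one half hits i *)
  assert (Hkeep : forall (idx : nat -> Z), (forall k, idx k <> i) ->
            sum_f_R0 (fun k => e (idx k)) N =
            sum_f_R0 (fun k => if Z.eq_dec (idx k) i then 0 else e (idx k)) N).
  { intros idx Hidx; apply sum_eq; intros k _; destruct (Z.eq_dec (idx k) i); congruence. }
  assert (Hhit : forall (idx : nat -> Z) k0, idx k0 = i -> (k0 <= N)%nat ->
            (forall k, idx k = i -> k = k0) ->
            sum_f_R0 (fun k => e (idx k)) N =
            sum_f_R0 (fun k => if Z.eq_dec (idx k) i then 0 else e (idx k)) N + e i).
  { intros idx k0 Hk0 HN Huniq.
    rewrite (sum_drop _ (fun k => if Z.eq_dec (idx k) i then 0 else e (idx k)) k0 N); auto.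
    - rewrite Hk0; destruct (Z.eq_dec i i); [ring | congruence].
    - intros k Hk; destruct (Z.eq_dec (idx k) i) as [Hki|]; auto; now apply Huniq in Hki. }
  destruct (Z_le_gt_dec 0 i).
  - pose proof (Hhit (fun k => Z.of_nat k) (Z.to_nat i)) as H1.
    pose proof (Hkeep (fun k => (- Z.of_nat k - 1)%Z)) as H2.
    cbv beta in H1, H2; rewrite H1, H2; try ring; intros; lia.
  - pose proof (Hhit (fun k => (- Z.of_nat k - 1)%Z) (Z.to_nat (- i - 1))) as H1.
    pose proof (Hkeep (fun k => Z.of_nat k)) as H2.
    cbv beta in H1, H2; rewrite H1, H2; try ring; intros; lia.
Qed.

Lemma sumZ_isolate (e B : Z -> R) (s T : R) (i : Z) :
  sumZ e s -> (forall j, 0 <= B j) -> (forall j, j <> i -> Rabs (e j) <= B j) ->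
  (forall N, partialZ B N <= T) -> Rabs (s - e i) <= T.
Proof.
  intros Hs HB He HT.
  assert (Hc : Un_cv (fun N => Rabs (partialZ e N - e i)) (Rabs (s - e i))).
  { apply cv_cvabs, CV_minus; [apply sumZ_cv; auto | apply Un_cv_const]. }
  apply (cv_le_bound _ _ _ (zindex i) Hc); intros N HN.
  rewrite (partialZ_drop e i N HN), Rplus_minus_r.
  eapply Rle_trans; [apply partialZ_abs|]; eapply Rle_trans; [|apply (HT N)].
  apply partialZ_le; intros j; unfold zdrop; destruct (Z.eq_dec j i); [rewrite Rabs_R0|]; auto.
Qed.

Lemma sumZ_partial_le h s : sumZ h s -> (forall j, 0 <= h j) -> forall N, partialZ h N <= s.
Proof.
  intros Hs H N; apply growing_ineq; [|apply sumZ_cv; auto].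
  intros n; unfold partialZ; rewrite !tech5.
  pose proof (H (Z.of_nat (S n))); pose proof (H (- Z.of_nat (S n) - 1)%Z); lra.
Qed.

Lemma sumZ_term_le h s : sumZ h s -> (forall j, 0 <= h j) -> forall j, h j <= s.
Proof.
  intros Hs H j; eapply Rle_trans; [|apply (sumZ_partial_le h s Hs H (zindex j))].
  rewrite (partialZ_drop h j) by lia.
  enough (0 <= partialZ (zdrop h j) (zindex j)) by lra.
  apply partialZ_nonneg; intros k; unfold zdrop; destruct (Z.eq_dec k j); auto; lra.
Qed.

Fixpoint peval (c : list R) (x : R) : R :=
  match c with nil => 0 | a :: c' => a + x * peval c' x end.

Fixpoint padd (c1 c2 : list R) : list R :=
  match c1, c2 with
  | nil, _ => c2
  | _, nil => c1
  | a1 :: c1', a2 :: c2' => (a1 + a2) :: padd c1' c2'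
  end.

Lemma peval_padd c1 c2 x : peval (padd c1 c2) x = peval c1 x + peval c2 x.
Proof. revert c2; induction c1 as [|a c1 IH]; intros [|b c2]; simpl; try ring; rewrite IH; ring. Qed.

Lemma peval_scale k c x : peval (map (Rmult k) c) x = k * peval c x.
Proof. induction c as [|a c IH]; simpl; [ring | rewrite IH; ring]. Qed.

Definition is_poly (P : R -> R) : Prop := exists c, forall x, P x = peval c x.

Lemma is_poly_monomial n : is_poly (fun x => x ^ n).
Proof.
  exists (repeat 0 n ++ 1 :: nil); intros x.
  induction n as [|n IH]; simpl; [ring | rewrite <- IH; ring].
Qed.

Lemma is_poly_mul_linear a P : is_poly P -> is_poly (fun x => (1 - a * x) * P x).
Proof.
  intros [c Hc]; exists (padd c (map (Rmult (- a)) (0 :: c))); intros x.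
  rewrite peval_padd, peval_scale; simpl; rewrite Hc; ring.
Qed.

Lemma vanishing_moments_poly (z d : Z -> R) P :
  (forall n, sumZ (fun j => z j ^ n * d j) 0) -> is_poly P ->
  sumZ (fun j => d j * P (z j)) 0.
Proof.
  intros H [c Hc].
  assert (Hm : forall m, sumZ (fun j => d j * (z j ^ m * peval c (z j))) 0).
  { clear Hc; induction c as [|a c IH]; intros m; simpl.
    - eapply sumZ_ext; [|apply sumZ_zero]; intros; simpl; ring.
    - pose proof (sumZ_plus _ _ _ _ (sumZ_scal _ _ a (H m)) (IH (S m))) as G.
      rewrite Rmult_0_r, Rplus_0_r in G; eapply sumZ_ext; [|exact G]; intros j; simpl; ring. }
  eapply sumZ_ext; [|apply (Hm 0%nat)]; intros j; simpl; rewrite Hc; ring.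
Qed.

Lemma exp_le_mono x y : x <= y -> exp x <= exp y.
Proof. intros [H| ->]; [left; now apply exp_increasing | lra]. Qed.

Lemma Rpower_pos q x : 0 < Rpower q x.
Proof. apply exp_pos. Qed.

Lemma Rpower_pow_exp q x n : 0 < q -> Rpower q x ^ n = Rpower q (INR n * x).
Proof.
  intros Hq; rewrite <- Rpower_pow by apply Rpower_pos.
  rewrite Rpower_mult; f_equal; ring.
Qed.

Lemma Rpower_decreasing q x y : 0 < q < 1 -> x <= y -> Rpower q y <= Rpower q x.
Proof.
  intros Hq Hxy; unfold Rpower.
  assert (ln q < 0) by (rewrite <- ln_1; apply ln_increasing; lra).
  apply exp_le_mono; nra.
Qed.

Lemma Rpower_le1 q x : 0 < q < 1 -> 0 <= x -> Rpower q x <= 1.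
Proof. intros Hq Hx; rewrite <- (Rpower_O q) by lra; now apply Rpower_decreasing. Qed.

Lemma pow_le1 x n : 0 <= x <= 1 -> x ^ n <= 1.
Proof. intros H; rewrite <- (pow1 n); apply pow_incr; lra. Qed.

Fixpoint qpoch (q : R) (L : nat) (u : R) : R :=
  match L with O => 1 | S L' => qpoch q L' u * (1 - u * q ^ S L') end.

Lemma qpoch_unit_range q L u : 0 < q < 1 -> 0 <= u <= 1 -> 0 <= qpoch q L u <= 1.
Proof.
  intros Hq Hu; induction L as [|L IH]; cbn [qpoch]; [lra|].
  assert (0 < q ^ S L <= 1) by (split; [apply pow_lt | apply pow_le1]; lra).
  assert (0 <= u * q ^ S L <= 1) by (split; [apply Rmult_le_pos | rewrite <- (Rmult_1_l 1); apply Rmult_le_compat]; lra).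
  split; [apply Rmult_le_pos | rewrite <- (Rmult_1_l 1); apply Rmult_le_compat]; lra.
Qed.

Lemma qpoch_root q L u l : (1 <= l <= L)%nat -> u * q ^ l = 1 -> qpoch q L u = 0.
Proof.
  intros Hl Hu; induction L as [|L IH]; [lia|]; cbn [qpoch].
  destruct (Nat.eq_dec l (S L)) as [->|Hne]; [rewrite Hu | rewrite IH by lia]; ring.
Qed.

Lemma one_minus_exp_lower q x : 0 < q < 1 -> 0 < x <= q -> exp (- (x / (1 - q))) <= 1 - x.
Proof.
  intros Hq Hx; set (y := x / (1 - x)).
  assert (Hy : 0 < y) by (apply Rdiv_lt_0_compat; lra).
  assert (Hexp : exp (- y) <= 1 - x).
  { rewrite exp_Ropp; replace (1 - x) with (/ (1 + y)) by (unfold y; field; lra).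
    pose proof (exp_ineq1_le y); apply Rinv_le_contravar; lra. }
  eapply Rle_trans; [|exact Hexp]; apply exp_le_mono.
  enough (x / (1 - x) <= x / (1 - q)) by (unfold y; lra).
  apply Rmult_le_compat_l; [lra|]; apply Rinv_le_contravar; lra.
Qed.

Lemma qpoch_one_lower q L : 0 < q < 1 -> exp (- (q / (1 - q) ^ 2)) <= qpoch q L 1.
Proof.
  intros Hq.
  assert (Hpartial : exp (- ((1 - q ^ L) * q / (1 - q) ^ 2)) <= qpoch q L 1).
  { induction L as [|L IH]; cbn [qpoch].
    - replace (- ((1 - q ^ 0) * q / (1 - q) ^ 2)) with 0 by (simpl; field; lra).
      rewrite exp_0; lra.
    - assert (HqL : 0 < q ^ S L <= q).
      { split; [apply pow_lt; lra|]. change (q ^ S L) with (q * q ^ L).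
        pose proof (pow_le1 q L ltac:(lra)); pose proof (pow_le q L ltac:(lra)); nra. }
      replace (- ((1 - q ^ S L) * q / (1 - q) ^ 2))
        with (- ((1 - q ^ L) * q / (1 - q) ^ 2) + - (q ^ S L / (1 - q))) by (simpl; field; lra).
      rewrite exp_plus, Rmult_1_l.
      apply Rmult_le_compat; try (left; apply exp_pos); auto.
      now apply one_minus_exp_lower. }
  eapply Rle_trans; [|exact Hpartial]; apply exp_le_mono, Ropp_le_contravar.
  assert (0 < q ^ L) by (apply pow_lt; lra).
  assert (0 < (1 - q) ^ 2) by (apply pow_lt; lra).
  unfold Rdiv; apply Rmult_le_compat_r; [left; now apply Rinv_0_lt_compat | nra].
Qed.

Lemma qpoch_large q L u : 0 < q < 1 -> 0 < u -> 1 <= u * q ^ L ->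
  Rabs (qpoch q L u) <= exp (INR L * ln u + ln q * (INR L * (INR L + 1) / 2)).
Proof.
  intros Hq Hu; induction L as [|L IH]; intros HL; cbn [qpoch].
  - replace (INR 0 * ln u + ln q * (INR 0 * (INR 0 + 1) / 2)) with 0 by (simpl; field).
    rewrite exp_0, Rabs_R1; lra.
  - assert (HqL : q ^ S L <= q ^ L) by (simpl; pose proof (pow_le q L ltac:(lra)); nra).
    specialize (IH ltac:(nra)); rewrite Rabs_mult.
    assert (Hfactor : Rabs (1 - u * q ^ S L) <= exp (ln u + INR (S L) * ln q)).
    { rewrite exp_plus, exp_ln by auto.
      replace (exp (INR (S L) * ln q)) with (q ^ S L) by (rewrite <- Rpower_pow by lra; reflexivity).
      rewrite Rabs_left1 by lra. pose proof (pow_lt q (S L) ltac:(lra)); nra. }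
    eapply Rle_trans; [apply Rmult_le_compat; try apply Rabs_pos; eauto|].
    rewrite <- exp_plus; apply exp_le_mono; rewrite S_INR; lra.
Qed.

Lemma is_poly_qpoch q L n c : is_poly (fun x => x ^ n * qpoch q L (x * c)).
Proof.
  induction L as [|L IH]; cbn [qpoch].
  - destruct (is_poly_monomial n) as [cc Hc]; exists cc; intros x; rewrite Rmult_1_r; apply Hc.
  - destruct (is_poly_mul_linear (c * q ^ S L) _ IH) as [cc Hc].
    exists cc; intros x; rewrite <- Hc; ring.
Qed.

Lemma geometric_partial_le q N : 0 < q < 1 -> sum_f_R0 (fun k => q ^ k) N <= 1 / (1 - q).
Proof.
  intros Hq; rewrite tech3 by lra; unfold Rdiv; apply Rmult_le_compat_r.
  - left; apply Rinv_0_lt_compat; lra.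
  - pose proof (pow_lt q (S N) ltac:(lra)); lra.
Qed.

Lemma le_of_le_geometric q X Y Z k0 : 0 < q < 1 ->
  (forall k, (k0 <= k)%nat -> X <= Y + Z * q ^ k) -> X <= Y.
Proof.
  intros Hq H.
  assert (Hcv : Un_cv (fun k => Y + Z * q ^ (k + k0)) (Y + Z * 0)).
  { apply CV_plus; [apply Un_cv_const | apply CV_mult; [apply Un_cv_const|]].
    intros eps Heps.
    destruct (pow_lt_1_zero q ltac:(rewrite Rabs_pos_eq; lra) eps Heps) as [N HN].
    exists N; intros n Hn; unfold Rdist; rewrite Rminus_0_r; apply HN; lia. }
  rewrite Rmult_0_r, Rplus_0_r in Hcv.
  refine (Rle_cv_lim _ (Un_cv_const X) Hcv); intros k; apply H; lia.
Qed.

(* The Gaussian decay q^(L(L+1)/2) of qpoch beats a growth exp(gam m^2) with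
   gam < b/2 = -ln q / 2: the exponent balance behind [far_term_bound] below. *)
Lemma gaussian_exponent_balance b gam I S L n :
  0 < b -> 0 <= L -> L + 1 <= S -> gam < b / 2 -> 1 <= S ->
  (Rabs (2 * gam * n + b * I + 2 * b) + Rabs gam * n ^ 2) / (b / 2 - gam) <= S ->
  gam * (S + n) ^ 2 + b * S * (I - S) + b * (L * S - L * (L + 1) / 2) <= - b * (L + 1) - b * S.
Proof.
  intros Hb HL HLS Hg HS1 HS.
  set (be := Rabs (2 * gam * n + b * I + 2 * b)) in *; set (de := Rabs gam * n ^ 2) in *.
  assert (Hde : 0 <= de) by (apply Rmult_le_pos; [apply Rabs_pos | apply pow2_ge_0]).
  assert (Hquad : be * S + de <= (b / 2 - gam) * S ^ 2).
  { assert (be + de <= (b / 2 - gam) * S).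
    { apply (Rmult_le_compat_l (b / 2 - gam)) in HS; [|lra].
      replace ((b / 2 - gam) * ((be + de) / (b / 2 - gam))) with (be + de) in HS by (field; lra).
      lra. }
    assert (de <= de * S) by nra.
    assert ((be + de) * S <= (b / 2 - gam) * S * S) by (apply Rmult_le_compat_r; lra).
    simpl; nra. }
  assert (A1 : (2 * gam * n + b * I + 2 * b) * S <= be * S).
  { apply Rmult_le_compat_r; [lra | apply Rle_abs]. }
  assert (A2 : gam * n ^ 2 <= de).
  { apply Rmult_le_compat_r; [apply pow2_ge_0 | apply Rle_abs]. }
  assert (A3 : b * (L * S - L * (L + 1) / 2) <= b * (S * S - S ^ 2 / 2)).
  { apply Rmult_le_compat_l; [lra | nra]. }
  assert (A4 : - b * (L + 1) >= - b * S) by nra.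
  simpl in *; nra.
Qed.

Lemma far_majorant_partial q c i N : 0 < q < 1 -> 0 <= c ->
  partialZ (fun j => if Z_lt_dec j 0 then c * Rpower q (IZR i - IZR j) else 0) N
  <= c * Rpower q (IZR i) * (1 / (1 - q)).
Proof.
  intros Hq Hc; unfold partialZ.
  rewrite (sum_eq _ (fun _ => 0)), sum_cte, Rmult_0_l, Rplus_0_l.
  2:{ intros k _; destruct (Z_lt_dec (Z.of_nat k) 0); [lia | auto]. }
  rewrite (sum_eq _ (fun k => q ^ k * (c * Rpower q (IZR i) * q))), <- scal_sum.
  2:{ intros k _; destruct (Z_lt_dec (- Z.of_nat k - 1) 0); [|lia].
      rewrite minus_IZR, opp_IZR, <- INR_IZR_INZ.
      replace (IZR i - (- INR k - 1)) with (IZR i + INR (S k)) by (rewrite S_INR; ring).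
      rewrite Rpower_plus, Rpower_pow by lra; simpl; ring. }
  pose proof (geometric_partial_le q N Hq).
  assert (0 <= c * Rpower q (IZR i)) by (apply Rmult_le_pos; [lra | left; apply Rpower_pos]).
  assert (0 <= sum_f_R0 (fun k => q ^ k) N) by (apply cond_pos_sum; intros; apply pow_le; lra).
  apply Rle_trans with (c * Rpower q (IZR i) * sum_f_R0 (fun k => q ^ k) N).
  - rewrite <- (Rmult_1_r (c * Rpower q (IZR i))) at 2.
    apply Rmult_le_compat_r; [lra | apply Rmult_le_compat_l; lra].
  - apply Rmult_le_compat_l; lra.
Qed.

(* Testing d against the polynomial x^n qpoch q L (x / q^i) kills
   the nodes q^j with i - L <= j < i; nodes with j > i contribute at most
   q^((i+1) n) sum |d|, and nodes with j < i - L are controlled by the growth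
   bound. Letting L, then n, tend to infinity gives d i = 0. *)
Section LatticeUniqueness.

Variables (q : R) (d : Z -> R) (C0 K gam : R) (N0 : nat).
Hypothesis q_range : 0 < q < 1.
Hypothesis K_nonneg : 0 <= K.
Hypothesis moments_vanish : forall n, sumZ (fun j => Rpower q (IZR j) ^ n * d j) 0.
Hypothesis abs_summable : forall N, partialZ (fun j => Rabs (d j)) N <= C0.
Hypothesis gam_small : gam < - ln q / 2.
Hypothesis growth :
  forall m j, (N0 <= m)%nat -> Rabs (d j) * Rpower q (IZR j) ^ m <= K * exp (gam * INR m ^ 2).

Let b := - ln q.

Lemma b_pos : 0 < b.
Proof. unfold b; assert (ln q < 0) by (rewrite <- ln_1; apply ln_increasing; lra); lra. Qed.

Definition test_term (i : Z) (n L : nat) (j : Z) : R :=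
  d j * (Rpower q (IZR j) ^ n * qpoch q L (Rpower q (IZR j - IZR i))).

Lemma near_term_bound i n L j : (i < j)%Z ->
  Rabs (test_term i n L j) <= Rabs (d j) * Rpower q (IZR i + 1) ^ n.
Proof.
  intros Hij; unfold test_term; apply IZR_lt in Hij.
  assert (Hu : 0 <= Rpower q (IZR j - IZR i) <= 1).
  { split; [left; apply Rpower_pos | apply Rpower_le1; lra]. }
  pose proof (qpoch_unit_range q L _ q_range Hu) as HQ.
  assert (Hz : Rpower q (IZR j) ^ n <= Rpower q (IZR i + 1) ^ n).
  { apply pow_incr; split; [left; apply Rpower_pos|].
    apply Rpower_decreasing; auto.
    assert (IZR (i + 1) <= IZR j) by (apply IZR_le; apply lt_IZR in Hij; lia).
    rewrite plus_IZR in *; lra. }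
  assert (0 <= Rpower q (IZR j) ^ n) by (apply pow_le; left; apply Rpower_pos).
  rewrite !Rabs_mult, (Rabs_pos_eq (_ ^ n)), (Rabs_pos_eq (qpoch _ _ _)) by lra.
  apply Rmult_le_compat_l; [apply Rabs_pos|].
  rewrite <- (Rmult_1_r (Rpower q (IZR i + 1) ^ n)); apply Rmult_le_compat; lra.
Qed.

Lemma root_term i L j : (i - Z.of_nat L <= j < i)%Z ->
  qpoch q L (Rpower q (IZR j - IZR i)) = 0.
Proof.
  intros Hj; apply (qpoch_root q L _ (Z.to_nat (i - j))); [lia|].
  rewrite <- Rpower_pow, <- Rpower_plus by lra.
  rewrite INR_IZR_INZ, Z2Nat.id, minus_IZR by lia.
  replace (IZR j - IZR i + (IZR i - IZR j)) with 0 by ring; now apply Rpower_O.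
Qed.

(* The size from which the Gaussian decay of qpoch wins at the far nodes. *)
Definition far_threshold (i : Z) (n : nat) : R :=
  (Rabs (2 * gam * INR n + b * IZR i + 2 * b) + Rabs gam * INR n ^ 2) / (b / 2 - gam).

Lemma far_qpoch_bound i L j : INR L + 1 <= IZR i - IZR j ->
  Rabs (qpoch q L (Rpower q (IZR j - IZR i)))
  <= exp (INR L * ((IZR i - IZR j) * b) - b * (INR L * (INR L + 1) / 2)).
Proof.
  intros HSL.
  assert (HuL : 1 <= Rpower q (IZR j - IZR i) * q ^ L).
  { rewrite <- Rpower_pow, <- Rpower_plus, <- (Rpower_O q) by lra.
    apply Rpower_decreasing; auto; lra. }
  pose proof (qpoch_large q L _ q_range (Rpower_pos _ _) HuL) as H.
  rewrite ln_Rpower in H; unfold b; eapply Rle_trans; [exact H|]; right; f_equal; ring.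
Qed.

(* Nodes above q^(i-L): the growth bound against the decay of qpoch. *)
Lemma far_term_bound i n L j :
  far_threshold i n <= INR L -> (N0 <= L)%nat -> (j < i - Z.of_nat L)%Z ->
  Rabs (test_term i n L j) <= K * q ^ (L + 1) * Rpower q (IZR i - IZR j).
Proof.
  intros HT HN0 Hj; unfold test_term.
  set (S := IZR i - IZR j).
  assert (HSL : INR L + 1 <= S).
  { unfold S; rewrite INR_IZR_INZ, <- minus_IZR, <- plus_IZR; apply IZR_le; lia. }
  set (m := (Z.to_nat (i - j) + n)%nat).
  assert (Hm : INR m = S + INR n).
  { unfold m, S; rewrite plus_INR, INR_IZR_INZ, Z2Nat.id, minus_IZR by lia; ring. }
  specialize (growth m j ltac:(unfold m; lia)).
  set (z := Rpower q (IZR j)) in *.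
  assert (Hz : 0 < z) by apply Rpower_pos.
  pose proof (far_qpoch_bound i L j HSL) as HQ; fold S in HQ.
  (* the coefficient at the node, from the growth bound at order m *)
  assert (Hdj : Rabs (d j) * z ^ n <= K * exp (gam * INR m ^ 2 + S * b * IZR j)).
  { assert (Hzm : z ^ n = z ^ m * exp (S * b * IZR j)).
    { unfold z; rewrite !Rpower_pow_exp by lra; unfold Rpower; rewrite <- exp_plus.
      f_equal; rewrite Hm; unfold b; ring. }
    rewrite Hzm, exp_plus, <- !Rmult_assoc.
    apply Rmult_le_compat_r; [left; apply exp_pos | exact growth]. }
  assert (Hbal : gam * INR m ^ 2 + S * b * IZR j + (INR L * (S * b) - b * (INR L * (INR L + 1) / 2))
                 <= - b * (INR L + 1) - b * S).
  { assert (HT' : far_threshold i n <= S) by lra.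
    pose proof (gaussian_exponent_balance b gam (IZR i) S (INR L) (INR n) b_pos (pos_INR L) HSL
                  ltac:(unfold b in *; lra) ltac:(pose proof (pos_INR L); lra) HT') as E.
    rewrite Hm; replace (IZR j) with (IZR i - S) by (unfold S; ring); nra. }
  rewrite Rabs_mult, Rabs_mult, (Rabs_pos_eq (z ^ n)) by (apply pow_le; lra).
  rewrite <- Rmult_assoc.
  eapply Rle_trans.
  { apply Rmult_le_compat; [apply Rmult_le_pos; [apply Rabs_pos | apply pow_le; lra]
                           | apply Rabs_pos | exact Hdj | exact HQ]. }
  replace (K * q ^ (L + 1) * Rpower q S) with (K * exp (- b * (INR L + 1) - b * S)).
  - rewrite Rmult_assoc, <- exp_plus; apply Rmult_le_compat_l, exp_le_mono; auto.
  - rewrite <- Rpower_pow by lra; unfold Rpower, b, S; rewrite plus_INR, Rmult_assoc, <- exp_plus.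
    f_equal; f_equal; simpl; ring.
Qed.


Definition test_majorant (i : Z) (n L : nat) (j : Z) : R :=
  Rabs (d j) * Rpower q (IZR i + 1) ^ n +
  (if Z_lt_dec j 0 then K * q ^ (L + 1) * Rpower q (IZR i - IZR j) else 0).

Lemma test_series_vanishes i n L : sumZ (test_term i n L) 0.
Proof.
  eapply sumZ_ext; [|apply (vanishing_moments_poly (fun j => Rpower q (IZR j)) d
                               (fun x => x ^ n * qpoch q L (x * / Rpower q (IZR i)))
                               moments_vanish (is_poly_qpoch _ _ _ _))].
  intros j; unfold test_term, Rminus; rewrite Rpower_plus, Rpower_Ropp; reflexivity.
Qed.

Lemma far_weight_nonneg L x : 0 <= K * q ^ (L + 1) * Rpower q x.
Proof. apply Rmult_le_pos; [apply Rmult_le_pos; [auto | apply pow_le; lra] | left; apply Rpower_pos]. Qed.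

Lemma test_majorant_nonneg i n L j : 0 <= test_majorant i n L j.
Proof.
  unfold test_majorant; apply Rplus_le_le_0_compat.
  - apply Rmult_le_pos; [apply Rabs_pos | apply pow_le; left; apply Rpower_pos].
  - destruct (Z_lt_dec j 0); [apply far_weight_nonneg | lra].
Qed.

Lemma test_term_dominated i n L j :
  far_threshold i n <= INR L -> (N0 <= L)%nat -> (Z.to_nat i <= L)%nat -> j <> i ->
  Rabs (test_term i n L j) <= test_majorant i n L j.
Proof.
  intros HT HN0 Hi Hji; unfold test_majorant.
  pose proof (Rmult_le_pos _ _ (Rabs_pos (d j)) (pow_le _ n (Rlt_le _ _ (Rpower_pos q (IZR i + 1))))).
  destruct (Z_lt_ge_dec i j) as [Hij|Hij].
  - pose proof (near_term_bound i n L j Hij).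
    destruct (Z_lt_dec j 0); [pose proof (far_weight_nonneg L (IZR i - IZR j)) |]; lra.
  - destruct (Z_le_gt_dec (i - Z.of_nat L) j) as [Hmid|Hfar].
    + unfold test_term; rewrite (root_term i L j ltac:(lia)), !Rmult_0_r, Rabs_R0.
      destruct (Z_lt_dec j 0); [pose proof (far_weight_nonneg L (IZR i - IZR j)) |]; lra.
    + destruct (Z_lt_dec j 0) as [_|]; [|lia].
      pose proof (far_term_bound i n L j HT HN0 ltac:(lia)); lra.
Qed.

Lemma test_majorant_partial i n L N :
  partialZ (test_majorant i n L) N
  <= Rpower q (IZR i + 1) ^ n * C0 + K * q ^ (L + 1) * Rpower q (IZR i) * (1 / (1 - q)).
Proof.
  unfold test_majorant; rewrite partialZ_plus; apply Rplus_le_compat.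
  - rewrite (partialZ_ext _ (fun j => Rpower q (IZR i + 1) ^ n * Rabs (d j))), partialZ_scal
      by (intros; ring).
    apply Rmult_le_compat_l; [apply pow_le; left; apply Rpower_pos | apply abs_summable].
  - apply far_majorant_partial; auto; apply Rmult_le_pos; [auto | apply pow_le; lra].
Qed.

Lemma test_estimate i n : exists L0, forall L, (L0 <= L)%nat ->
  Rabs (d i) * (Rpower q (IZR i) ^ n * qpoch q L 1)
  <= Rpower q (IZR i + 1) ^ n * C0 + K * q ^ (L + 1) * Rpower q (IZR i) * (1 / (1 - q)).
Proof.
  destruct (INR_archimed 1 (far_threshold i n) ltac:(lra)) as [LT HLT]; rewrite Rmult_1_r in HLT.
  exists (max (max LT N0) (Z.to_nat i)); intros L HL.
  assert (INR LT <= INR L) by (apply le_INR; lia).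
  pose proof (sumZ_isolate _ _ 0 _ i (test_series_vanishes i n L) (test_majorant_nonneg i n L)
                (fun j => test_term_dominated i n L j ltac:(lra) ltac:(lia) ltac:(lia))
                (test_majorant_partial i n L)) as Hiso.
  unfold test_term in Hiso.
  rewrite Rminus_diag, Rpower_O, Rminus_0_l, Rabs_Ropp, Rabs_mult in Hiso by lra.
  rewrite (Rabs_pos_eq (_ * qpoch q L 1)) in Hiso; [exact Hiso|].
  apply Rmult_le_pos; [apply pow_le; left; apply Rpower_pos|].
  pose proof (qpoch_one_lower q L q_range); pose proof (exp_pos (- (q / (1 - q) ^ 2))); lra.
Qed.

Theorem lattice_uniqueness : forall i, d i = 0.
Proof.
  intros i.
  set (c := exp (- (q / (1 - q) ^ 2))).
  assert (Hc : 0 < c) by apply exp_pos.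
  assert (Hn : forall n, Rabs (d i) * c <= 0 + C0 * q ^ n).
  { intros n; destruct (test_estimate i n) as [L0 HL0].
    set (ti := Rpower q (IZR i)).
    assert (Hti : 0 < ti ^ n) by apply pow_lt, Rpower_pos.
    assert (Hi1 : Rpower q (IZR i + 1) = ti * q) by (unfold ti; rewrite Rpower_plus, Rpower_1; lra).
    apply (Rmult_le_reg_r (ti ^ n)); auto.
    apply (le_of_le_geometric q _ _ (K * ti * (1 / (1 - q))) (S L0) q_range); intros k Hk.
    specialize (HL0 (k - 1)%nat ltac:(lia)); replace (k - 1 + 1)%nat with k in HL0 by lia.
    rewrite Hi1, Rpow_mult_distr in HL0.
    pose proof (qpoch_one_lower q (k - 1) q_range) as Hlow; fold c in Hlow.
    assert (Rabs (d i) * c * ti ^ n <= Rabs (d i) * (ti ^ n * qpoch q (k - 1) 1)).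
    { rewrite Rmult_assoc, (Rmult_comm c); apply Rmult_le_compat_l; [apply Rabs_pos|].
      apply Rmult_le_compat_l; lra. }
    fold ti in HL0; lra. }
  assert (Habs : Rabs (d i) <= 0).
  { apply (Rmult_le_reg_r c); auto; rewrite Rmult_0_l.
    apply (le_of_le_geometric q _ _ C0 0 q_range); intros; apply Hn. }
  pose proof (Rabs_pos (d i)); destruct (Req_dec (d i) 0) as [|Hne]; auto.
  pose proof (Rabs_pos_lt _ Hne); lra.
Qed.

End LatticeUniqueness.

Lemma cdf_mono F : is_cdf F -> forall x y, x <= y -> F x <= F y.
Proof. intros [H _]; exact H. Qed.

Lemma cdf_le1 F : is_cdf F -> forall x, F x <= 1.
Proof.
  intros HF x; destruct (Rle_dec (F x) 1) as [|Hgt]; auto; exfalso.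
  destruct HF as (Hm & _ & _ & Hinf); destruct (Hinf (F x - 1) ltac:(lra)) as [M HM].
  specialize (HM (Rmax x M) (Rmax_r _ _)); pose proof (Hm x (Rmax x M) (Rmax_l _ _)).
  apply Rabs_def2 in HM; lra.
Qed.

Lemma cdf_ge0 F : is_cdf F -> nonneg_cdf F -> forall x, 0 <= F x.
Proof.
  intros HF Hn x; destruct (Rlt_dec x 0); [rewrite Hn; lra|].
  rewrite <- (Hn (-1)) by lra; apply (cdf_mono F HF); lra.
Qed.

Lemma cdf_at0 F : is_cdf F -> nonneg_cdf F -> abs_cont_cdf F -> F 0 = 0.
Proof.
  intros HF Hn Hac; pose proof (cdf_ge0 F HF Hn 0).
  destruct (Rle_dec (F 0) 0); [lra|]; exfalso.
  destruct (Hac (F 0) ltac:(lra)) as (delta & Hd & Hdel).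
  specialize (Hdel 1%nat (fun _ => - delta / 2) (fun _ => 0)); simpl in Hdel.
  rewrite (Hn (- delta / 2)), Rminus_0_r, Rabs_pos_eq in Hdel by lra.
  assert (0 + F 0 < F 0) by (apply Hdel; intros; lra || lia); lra.
Qed.

(* Right continuity at 0, where F vanishes. *)
Lemma cdf_small_near0 F : is_cdf F -> nonneg_cdf F -> abs_cont_cdf F ->
  forall eps, 0 < eps -> exists dl, 0 < dl /\ forall y, 0 <= y < dl -> F y < eps.
Proof.
  intros HF Hn Hac eps Heps; pose proof (cdf_at0 F HF Hn Hac) as H0.
  destruct HF as (_ & Hr & _); destruct (Hr 0 eps Heps) as (dl & Hdl & Hy).
  exists dl; split; auto; intros y Hy'; specialize (Hy y ltac:(lra)).
  rewrite H0, Rminus_0_r in Hy; apply Rabs_def2 in Hy; lra.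
Qed.

(* q-densities.  For a law without atom at 0, the difference quotient
   (F t - F (q t)) / (t (1 - q)) is a q-density: its Jackson sums telescope. *)

Definition qdiff_density (q : R) (F : R -> R) (t : R) : R := (F t - F (q * t)) / (t * (1 - q)).

Lemma qdiff_density_is_q_density q F : 0 < q < 1 -> is_cdf F -> nonneg_cdf F -> abs_cont_cdf F ->
  q_density q F (qdiff_density q F).
Proof.
  intros Hq HF Hn Hac x Hx; unfold jackson0.
  apply (isum_ext (fun j => F (x * q ^ j) - F (x * q ^ S j))).
  { intros j; unfold qdiff_density; replace (q * (x * q ^ j)) with (x * q ^ S j) by (simpl; ring).
    assert (0 < q ^ j) by (apply pow_lt; lra); field; lra. }
  intros eps Heps; destruct (cdf_small_near0 F HF Hn Hac eps Heps) as (dl & Hdl & Hy).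
  destruct (pow_lt_1_zero q ltac:(rewrite Rabs_pos_eq; lra) (dl / x)
              ltac:(apply Rdiv_lt_0_compat; lra)) as [N HN].
  exists N; intros m Hm; unfold Rdist.
  rewrite (telescope (fun j => F (x * q ^ j))), pow_O, Rmult_1_r.
  replace (F x - F (x * q ^ S m) - F x) with (- F (x * q ^ S m)) by ring.
  specialize (HN (S m) ltac:(lia)); rewrite Rabs_pos_eq in HN by (apply pow_le; lra).
  assert (0 <= q ^ S m) by (apply pow_le; lra).
  assert (x * q ^ S m < dl).
  { apply (Rmult_lt_compat_l x) in HN; auto.
    replace (x * (dl / x)) with dl in HN by (field; lra); lra. }
  rewrite Rabs_Ropp, Rabs_pos_eq by (apply (cdf_ge0 F HF Hn)).
  apply Hy; split; [apply Rmult_le_pos|]; lra.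
Qed.

Lemma q_density_diff q G g : 0 < q < 1 -> q_density q G g ->
  forall x, 0 < x -> G x - G (q * x) = x * (1 - q) * g x.
Proof.
  intros Hq Hg x Hx; pose proof (Hg x Hx) as H1; pose proof (Hg (q * x) ltac:(nra)) as H2.
  unfold jackson0 in *.
  assert (H2' : infinite_sum (fun j => (fun j => x * (1 - q) * g (x * q ^ j) * q ^ j) (S j)) (G (q * x))).
  { eapply isum_ext; [|exact H2]; intros j; cbv beta.
    replace (q * x * q ^ j) with (x * q ^ S j) by (simpl; ring); simpl; ring. }
  rewrite (isum_shift _ _ _ H1 H2'); cbv beta; rewrite pow_O, !Rmult_1_r; ring.
Qed.

Definition qmass (q : R) (F : R -> R) (j : Z) : R :=
  F (Rpower q (IZR j)) - F (q * Rpower q (IZR j)).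

Lemma qmass_nonneg q F j : 0 < q < 1 -> (forall x y, x <= y -> F x <= F y) -> 0 <= qmass q F j.
Proof.
  intros Hq Hmono; unfold qmass; pose proof (Rpower_pos q (IZR j)).
  pose proof (Hmono (q * Rpower q (IZR j)) (Rpower q (IZR j)) ltac:(nra)); lra.
Qed.

Lemma q_moment_term q G g n j : 0 < q < 1 -> q_density q G g ->
  (1 - q) * powerRZ q (j * Z.of_nat (S n)) * g (powerRZ q j) = Rpower q (IZR j) ^ n * qmass q G j.
Proof.
  intros Hq Hg; rewrite !powerRZ_Rpower by lra; rewrite mult_IZR, <- INR_IZR_INZ.
  replace (Rpower q (IZR j * INR (S n))) with (Rpower q (IZR j) ^ S n)
    by (rewrite Rpower_pow_exp by lra; f_equal; ring).
  unfold qmass; pose proof (Rpower_pos q (IZR j)).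
  rewrite (q_density_diff q G g Hq Hg) by auto; simpl; ring.
Qed.

Corollary q_moment_lattice q G g n m : 0 < q < 1 -> q_density q G g ->
  q_moment q g n m <-> sumZ (fun j => Rpower q (IZR j) ^ n * qmass q G j) m.
Proof.
  intros Hq Hg; split; intros H; (eapply sumZ_ext; [|exact H]); intros j; cbv beta;
    [| symmetry]; now apply q_moment_term.
Qed.

(* The ordinary moment
   mu = E[X^m] is the limit of the tail integrals int_0^b m x^(m-1) (1 - F x) dx,
   which increase with b; comparing the cells (r^k, r^(k+1)] of the geometric
   grid r = 1/q with these integrals bounds the q-moment sums. *)
Section MomentBounds.

Variable F : R -> R.
Hypothesis F_mono : forall x y, x <= y -> F x <= F y.
Hypothesis F_le1 : forall x, F x <= 1.

Definition tail_integrand (m : nat) (x : R) : R := INR m * x ^ (m - 1) * (1 - F x).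

Variables (m : nat) (pr : forall b, Riemann_integrable (tail_integrand m) 0 b).

Lemma tail_integral_nonneg b : 0 <= b -> 0 <= RiemannInt (pr b).
Proof.
  intros Hb; apply Rle_trans with (RiemannInt (RiemannInt_P14 0 b 0)).
  - rewrite RiemannInt_P15; lra.
  - apply RiemannInt_P19; auto; intros x Hx; unfold fct_cte, tail_integrand.
    pose proof (F_le1 x); pose proof (pos_INR m); pose proof (pow_le x (m - 1) ltac:(lra)).
    apply Rmult_le_pos; [apply Rmult_le_pos|]; lra.
Qed.

(* On [u, v] the integrand is at least m u^(m-1) (1 - F v). *)
Lemma tail_integral_step u v : 0 <= u <= v ->
  RiemannInt (pr u) + INR m * u ^ (m - 1) * (v - u) * (1 - F v) <= RiemannInt (pr v).
Proof.
  intros Huv; set (pruv := RiemannInt_P24 (RiemannInt_P1 (pr u)) (pr v)).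
  rewrite <- (RiemannInt_P26 (pr u) pruv (pr v)); apply Rplus_le_compat_l.
  set (c := INR m * u ^ (m - 1) * (1 - F v)).
  apply Rle_trans with (RiemannInt (RiemannInt_P14 u v c)).
  - rewrite RiemannInt_P15; unfold c; lra.
  - apply RiemannInt_P19; try lra; intros x Hx; unfold fct_cte, c, tail_integrand.
    assert (u ^ (m - 1) <= x ^ (m - 1)) by (apply pow_incr; lra).
    pose proof (F_mono x v ltac:(lra)); pose proof (F_le1 v); pose proof (pos_INR m).
    pose proof (pow_le u (m - 1) ltac:(lra)).
    apply Rmult_le_compat; try lra; [apply Rmult_le_pos; lra | apply Rmult_le_compat_l; lra].
Qed.

(* Every tail integral is below the moment, the limit of the increasing family. *)
Lemma tail_integral_le_moment mu :
  (forall eps, 0 < eps -> exists B, forall b, B <= b -> Rabs (RiemannInt (pr b) - mu) < eps) ->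
  forall b, 0 <= b -> RiemannInt (pr b) <= mu.
Proof.
  intros Hlim b Hb; apply Rle_plus_epsilon; intros eps Heps.
  destruct (Hlim eps Heps) as [B HB]; specialize (HB (Rmax b B) (Rmax_r _ _)).
  pose proof (tail_integral_step b (Rmax b B) (conj Hb (Rmax_l _ _))).
  assert (0 <= INR m * b ^ (m - 1) * (Rmax b B - b) * (1 - F (Rmax b B))).
  { pose proof (Rmax_l b B); pose proof (F_le1 (Rmax b B)); pose proof (pos_INR m).
    pose proof (pow_le b (m - 1) Hb); apply Rmult_le_pos; [apply Rmult_le_pos; [apply Rmult_le_pos|]|]; lra. }
  apply Rabs_def2 in HB; lra.
Qed.

(* Lower Riemann sums of the tail integrals over the grid r^k, r > 1. *)
Lemma tail_cells_le_moment r mu : 1 < r ->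
  (forall eps, 0 < eps -> exists B, forall b, B <= b -> Rabs (RiemannInt (pr b) - mu) < eps) ->
  forall N, sum_f_R0 (fun k => INR m * (r ^ k) ^ (m - 1) * (r ^ S k - r ^ k) * (1 - F (r ^ S k))) N
            <= mu.
Proof.
  intros Hr Hlim N.
  assert (Hrk : forall k, 0 <= r ^ k <= r ^ S k).
  { intros k; pose proof (pow_le r k ltac:(lra)); simpl; split; nra. }
  eapply Rle_trans; [|apply (tail_integral_le_moment mu Hlim (r ^ S N)), pow_le; lra].
  induction N as [|N IH]; cbn [sum_f_R0].
  - pose proof (tail_integral_step _ _ (Hrk 0%nat)).
    pose proof (tail_integral_nonneg (r ^ 0) (pow_le r 0 ltac:(lra))); lra.
  - pose proof (tail_integral_step _ _ (Hrk (S N))); lra.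
Qed.

End MomentBounds.

Lemma lattice_nonneg_index q k : 0 < q -> Rpower q (IZR (Z.of_nat k)) = q ^ k.
Proof. intros; rewrite <- INR_IZR_INZ; now apply Rpower_pow. Qed.

Lemma lattice_neg_index q k : 0 < q -> Rpower q (IZR (- Z.of_nat k - 1)) = (/ q) ^ S k.
Proof.
  intros Hq; rewrite minus_IZR, opp_IZR, <- INR_IZR_INZ.
  replace (- INR k - 1) with (- INR (S k)) by (rewrite S_INR; ring).
  rewrite Rpower_Ropp, Rpower_pow, pow_inv; auto.
Qed.

Section CellSums.

Variable F : R -> R.
Hypothesis F_mono : forall x y, x <= y -> F x <= F y.
Hypothesis F_le1 : forall x, F x <= 1.
Hypothesis F_ge0 : forall x, 0 <= F x.

Lemma upper_cells_bound (n : nat) (mu r : R) : 1 < r -> is_moment F (S n) mu ->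
  forall N, sum_f_R0 (fun k => (r ^ S k) ^ S n * (F (r ^ S k) - F (r ^ k))) N
            <= r ^ S n + r ^ (2 * S n) / (INR (S n) * (r - 1)) * mu.
Proof.
  intros Hr [pr Hpr].
  set (T := fun k => INR (S n) * (r ^ k) ^ (S n - 1) * (r ^ S k - r ^ k) * (1 - F (r ^ S k))).
  pose proof (tail_cells_le_moment F F_mono F_le1 _ pr r mu Hr Hpr) as HT.
  set (Cc := r ^ (2 * S n) / (INR (S n) * (r - 1))).
  assert (HCc : 0 <= Cc).
  { unfold Cc; apply Rmult_le_pos; [apply pow_le; lra|].
    left; apply Rinv_0_lt_compat, Rmult_lt_0_compat; [apply lt_0_INR; lia | lra]. }
  (* each cell beyond the first is dominated by the previous tail cell *)
  assert (Hcell : forall k, (r ^ S (S k)) ^ S n * (F (r ^ S (S k)) - F (r ^ S k)) <= Cc * T k).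
  { intros k; replace (Cc * T k) with ((r ^ S (S k)) ^ S n * (1 - F (r ^ S k))).
    - apply Rmult_le_compat_l; [apply pow_le, pow_le; lra|]; pose proof (F_le1 (r ^ S (S k))); lra.
    - unfold Cc, T; replace (S n - 1)%nat with n by lia; replace (2 * S n)%nat with (S n + S n)%nat by lia.
      rewrite pow_add; change (r ^ S (S k)) with (r * (r * r ^ k)); change (r ^ S k) with (r * r ^ k).
      set (x := r ^ k); rewrite !Rpow_mult_distr; change (x ^ S n) with (x * x ^ n).
      field; split; [lra | apply not_0_INR; lia]. }
  assert (Hfirst : (r ^ 1) ^ S n * (F (r ^ 1) - F (r ^ 0)) <= r ^ S n).
  { rewrite pow_1; pose proof (F_le1 r); pose proof (F_ge0 (r ^ 0)).
    rewrite <- (Rmult_1_r (r ^ S n)) at 2; apply Rmult_le_compat_l; [apply pow_le|]; lra. }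
  intros [|N].
  - cbn [sum_f_R0]; pose proof (pow_le r (S n) ltac:(lra)).
    pose proof (Rmult_le_pos _ _ HCc (Rle_trans _ _ _ (tail_integral_nonneg F F_le1 _ pr 0 (Rle_refl 0))
                  (tail_integral_le_moment F F_mono F_le1 _ pr mu Hpr 0 (Rle_refl 0)))); lra.
  - rewrite decomp_sum by lia; simpl pred.
    assert (sum_f_R0 (fun i => (r ^ S (S i)) ^ S n * (F (r ^ S (S i)) - F (r ^ S i))) N <= Cc * mu).
    { eapply Rle_trans; [|apply Rmult_le_compat_l; [exact HCc | apply (HT N)]].
      rewrite scal_sum; apply sum_Rle; intros k _; rewrite (Rmult_comm (T k)); apply Hcell. }
    fold Cc; lra.
Qed.

(* The q-moment sums of F converge; for n >= 1 they are controlled by the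
   ordinary moment of order n (the cells below 1 carry total mass at most 1). *)
Lemma q_moment_bound q n mu : 0 < q < 1 -> ((1 <= n)%nat -> is_moment F n mu) ->
  exists M, sumZ (fun j => Rpower q (IZR j) ^ n * qmass q F j) M /\
    ((1 <= n)%nat -> M <= 1 + (/ q) ^ n + (/ q) ^ (2 * n) / (INR n * (/ q - 1)) * mu).
Proof.
  intros Hq Hmom; set (r := / q).
  assert (Hr : 1 < r) by (unfold r; rewrite <- Rinv_1; apply Rinv_lt_contravar; lra).
  assert (Hterm : forall j, 0 <= Rpower q (IZR j) ^ n * qmass q F j).
  { intros j; apply Rmult_le_pos; [apply pow_le; left; apply Rpower_pos | now apply qmass_nonneg]. }
  assert (Hlower : exists l1, infinite_sum (fun k => Rpower q (IZR (Z.of_nat k)) ^ n * qmass q F (Z.of_nat k)) l1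
                              /\ l1 <= 1).
  { apply nonneg_series_cv; [intros; apply Hterm|]; intros N; eapply Rle_trans.
    - apply (sum_Rle _ (fun k => F (q ^ k) - F (q ^ S k))); intros k _.
      unfold qmass; rewrite !lattice_nonneg_index by lra; change (q * q ^ k) with (q ^ S k).
      assert (0 <= q ^ k <= 1) by (split; [apply pow_le | apply pow_le1]; lra).
      pose proof (F_mono (q ^ S k) (q ^ k) ltac:(simpl; nra)).
      rewrite <- (Rmult_1_l (F (q ^ k) - F (q ^ S k))) at 2.
      apply Rmult_le_compat_r; [lra | apply pow_le1; split; [apply pow_le|]; lra].
    - rewrite (telescope (fun k => F (q ^ k))); pose proof (F_ge0 (q ^ S N)); pose proof (F_le1 (q ^ 0)); lra. }
  destruct Hlower as (l1 & Hl1 & Hl1b).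
  set (upper := fun k => Rpower q (IZR (- Z.of_nat k - 1)) ^ n * qmass q F (- Z.of_nat k - 1)).
  assert (Hupper : forall k, upper k = (r ^ S k) ^ n * (F (r ^ S k) - F (r ^ k))).
  { intros k; unfold upper, qmass; rewrite lattice_neg_index by lra; fold r.
    replace (q * r ^ S k) with (r ^ k) by (unfold r; simpl; field; lra); reflexivity. }
  destruct n as [|n].
  - assert (Hup : exists l2, infinite_sum upper l2 /\ l2 <= 1).
    { apply nonneg_series_cv; [intros; apply Hterm|]; intros N; rewrite (sum_eq _ (fun k => - F (r ^ k) - - F (r ^ S k))), telescope.
      - pose proof (F_ge0 (r ^ 0)); pose proof (F_le1 (r ^ S N)); lra.
      - intros k _; rewrite Hupper; simpl; ring. }
    destruct Hup as (l2 & Hl2 & _); exists (l1 + l2); split; [exists l1, l2; auto | lia].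
  - destruct (nonneg_series_cv upper _ (fun k => Hterm _)
                (fun N => Rle_trans _ _ _ (Req_le _ _ (sum_eq _ _ N (fun k _ => Hupper k)))
                            (upper_cells_bound n mu r Hr (Hmom ltac:(lia)) N))) as (l2 & Hl2 & Hl2b).
    exists (l1 + l2); split; [exists l1, l2; auto | intros _; fold r; lra].
Qed.

End CellSums.

Lemma qeq_of_equal_cells q F G f g : 0 < q < 1 -> q_density q F f -> q_density q G g ->
  (forall j, qmass q F j = qmass q G j) -> qeq q f g.
Proof.
  intros Hq Hf Hg Hcells j; specialize (Hcells j); unfold qmass in Hcells.
  rewrite powerRZ_Rpower by lra; set (t := Rpower q (IZR j)) in *.
  assert (Ht : 0 < t) by apply Rpower_pos.
  pose proof (q_density_diff q F f Hq Hf t Ht); pose proof (q_density_diff q G g Hq Hg t Ht).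
  apply (Rmult_eq_reg_l (t * (1 - q))); [lra | apply Rmult_integral_contrapositive; split; lra].
Qed.

(* A q-moment sequence of growth at most exp(gam m^2), gam < -ln q / 2,
   determines the q-density on the lattice: the difference of the cell masses
   of two laws with these q-moments satisfies [lattice_uniqueness]. *)
Lemma lattice_determinacy q F f K gam N0 :
  0 < q < 1 -> is_cdf F -> q_density q F f -> 0 <= K -> gam < - ln q / 2 ->
  (forall m M, (N0 <= m)%nat -> q_moment q f m M -> M <= K * exp (gam * INR m ^ 2)) ->
  forall G g, is_cdf G -> q_density q G g ->
  (forall k, exists m, q_moment q f k m /\ q_moment q g k m) -> qeq q f g.
Proof.
  intros Hq HF Hf HK Hgam Hgrowth G g HG Hg Hmm.
  set (d := fun j => qmass q F j - qmass q G j).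
  pose proof (fun j => qmass_nonneg q F j Hq (cdf_mono F HF)) as HmF.
  pose proof (fun j => qmass_nonneg q G j Hq (cdf_mono G HG)) as HmG.
  assert (Hweight : forall n j, 0 <= Rpower q (IZR j) ^ n) by (intros; apply pow_le; left; apply Rpower_pos).
  assert (Habs : forall j, Rabs (d j) <= qmass q F j + qmass q G j).
  { intros j; unfold d; specialize (HmF j); specialize (HmG j); unfold Rabs; destruct Rcase_abs; lra. }
  assert (Hsums : forall n, exists M, q_moment q f n M /\
            sumZ (fun j => Rpower q (IZR j) ^ n * qmass q F j) M /\
            sumZ (fun j => Rpower q (IZR j) ^ n * qmass q G j) M).
  { intros n; destruct (Hmm n) as (M & H1 & H2); exists M.
    split; [|split]; [exact H1 | apply (q_moment_lattice q F f) | apply (q_moment_lattice q G g)]; auto. }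
  assert (Hvanish : forall n, sumZ (fun j => Rpower q (IZR j) ^ n * d j) 0).
  { intros n; destruct (Hsums n) as (M & _ & H1 & H2).
    pose proof (sumZ_plus _ _ _ _ H1 (sumZ_scal _ _ (-1) H2)) as H.
    replace (M + -1 * M) with 0 in H by ring; eapply sumZ_ext; [|exact H]; intros j; unfold d; ring. }
  destruct (Hsums 0%nat) as (M0 & _ & H01 & H02).
  assert (Hsummable : forall N, partialZ (fun j => Rabs (d j)) N <= M0 + M0).
  { intros N; eapply Rle_trans; [apply (partialZ_le _ (fun j => 1 * qmass q F j + 1 * qmass q G j))|].
    - intros j; rewrite !Rmult_1_l; apply Habs.
    - rewrite partialZ_plus; apply Rplus_le_compat;
        [apply (sumZ_partial_le _ _ H01) | apply (sumZ_partial_le _ _ H02)];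
        intros; simpl; rewrite Rmult_1_l; auto. }
  assert (Hgr : forall m j, (N0 <= m)%nat ->
            Rabs (d j) * Rpower q (IZR j) ^ m <= (2 * K) * exp (gam * INR m ^ 2)).
  { intros m j Hm; destruct (Hsums m) as (M & Hf_m & H1 & H2).
    pose proof (sumZ_term_le _ _ H1 (fun j => Rmult_le_pos _ _ (Hweight m j) (HmF j)) j).
    pose proof (sumZ_term_le _ _ H2 (fun j => Rmult_le_pos _ _ (Hweight m j) (HmG j)) j).
    pose proof (Hgrowth m M Hm Hf_m); specialize (Habs j); specialize (Hweight m j); nra. }
  apply (qeq_of_equal_cells q F G f g Hq Hf Hg); intros j.
  pose proof (lattice_uniqueness q d (M0 + M0) (2 * K) gam N0 Hq ltac:(lra)
                Hvanish Hsummable Hgam Hgr j); unfold d in *; lra.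
Qed.

(* ln (mu n) / n^2 < e  gives  mu n <= exp (e n^2)  (trivially when mu n <= 0). *)
Lemma moment_le_gauss (mun e : R) (n : nat) : (1 <= n)%nat ->
  ln mun / INR n ^ 2 < e -> mun <= exp (e * INR n ^ 2).
Proof.
  intros Hn Hls; pose proof (le_INR 1 n Hn); simpl in *.
  destruct (Rle_dec mun 0); [pose proof (exp_pos (e * (INR n * (INR n * 1)))); lra|].
  rewrite <- (exp_ln mun) by lra; apply exp_le_mono.
  apply (Rmult_lt_compat_r (INR n * (INR n * 1))) in Hls; [|nra].
  unfold Rdiv in Hls; rewrite Rmult_assoc, Rinv_l in Hls by nra; lra.
Qed.

(* If ln (mu n) / n^2 < c + eps eventually, the bound of [q_moment_bound] grows
   at most like exp((c + 2 eps) n^2): the factors (1/q)^(2n) are absorbed. *)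
Lemma moment_bound_growth q (mu : nat -> R) c eps N1 :
  0 < q < 1 -> 0 <= c -> 0 < eps ->
  (forall n, (N1 <= n)%nat -> ln (mu n) / INR n ^ 2 < c + eps) ->
  exists N0, forall n, (N0 <= n)%nat ->
    1 + (/ q) ^ n + (/ q) ^ (2 * n) / (INR n * (/ q - 1)) * mu n
    <= (2 + 1 / (/ q - 1)) * exp ((c + 2 * eps) * INR n ^ 2).
Proof.
  intros Hq Hc Heps Hls; set (r := / q).
  assert (Hr : 1 < r) by (unfold r; rewrite <- Rinv_1; apply Rinv_lt_contravar; lra).
  destruct (INR_archimed eps (2 * ln r) Heps) as [nA HnA].
  exists (max (max nA N1) 1); intros n Hn.
  set (x := INR n).
  assert (Hx : 1 <= x) by (unfold x; apply (le_INR 1); lia).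
  set (E := exp ((c + eps) * x ^ 2)).
  assert (HE : 1 <= E) by (unfold E; rewrite <- exp_0; apply exp_le_mono; nra).
  assert (Hmu : mu n <= E) by (apply moment_le_gauss; [lia | apply Hls; lia]).
  assert (Hr2n : r ^ (2 * n) = exp (2 * x * ln r)).
  { rewrite <- Rpower_pow by lra; unfold Rpower; rewrite mult_INR; reflexivity. }
  assert (Hgrid : 1 <= r ^ n <= r ^ (2 * n)).
  { split; [rewrite <- (pow1 n); apply pow_incr; lra | apply Rle_pow; lra || lia]. }
  assert (Hinv : 0 < / (r - 1)) by (apply Rinv_0_lt_compat; lra).
  (* the three terms are each at most r^(2n) E times their constant *)
  assert (Hmoment : r ^ (2 * n) / (x * (r - 1)) * mu n <= r ^ (2 * n) * E * / (r - 1)).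
  { unfold Rdiv; rewrite Rinv_mult.
    destruct (Rle_dec (mu n) 0).
    - assert (0 <= r ^ (2 * n) * / x * / (r - 1)).
      { apply Rmult_le_pos; [apply Rmult_le_pos|]; [lra | left; apply Rinv_0_lt_compat; lra | lra]. }
      assert (0 <= r ^ (2 * n) * E * / (r - 1)) by (apply Rmult_le_pos; [nra | lra]).
      nra.
    - assert (/ x <= 1) by (rewrite <- Rinv_1; apply Rinv_le_contravar; lra).
      assert (0 < / x) by (apply Rinv_0_lt_compat; lra).
      replace (r ^ (2 * n) * (/ x * / (r - 1)) * mu n) with ((r ^ (2 * n) * / (r - 1)) * (/ x * mu n)) by ring.
      replace (r ^ (2 * n) * E * / (r - 1)) with ((r ^ (2 * n) * / (r - 1)) * (1 * E)) by ring.
      apply Rmult_le_compat_l; [apply Rmult_le_pos; lra | apply Rmult_le_compat; lra]. }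
  assert (Hgauss : r ^ (2 * n) * E <= exp ((c + 2 * eps) * x ^ 2)).
  { rewrite Hr2n; unfold E; rewrite <- exp_plus; apply exp_le_mono.
    assert (INR nA <= x) by (unfold x; apply le_INR; lia).
    assert (2 * ln r <= eps * x) by nra; nra. }
  unfold Rdiv at 2; rewrite Rmult_1_l.
  assert (r ^ (2 * n) <= r ^ (2 * n) * E) by nra.
  assert (0 < r ^ (2 * n)) by lra.
  fold x; nra.
Qed.

Theorem proposition4 (F : R -> R) (mu : nat -> R) (q0 : R) :
  is_cdf F -> nonneg_cdf F -> abs_cont_cdf F ->
  (forall n, (1 <= n)%nat -> is_moment F n (mu n)) ->
  0 < q0 <= 1 ->
  is_limsup (fun n => ln (mu n) / (INR n ^ 2)) (ln (1 / q0) / 2) ->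
  forall q, 0 < q < q0 -> q_moment_determinate q F.
Proof.
  intros HF Hn Hac Hmom Hq0 Hls q Hq.
  assert (Hq1 : 0 < q < 1) by lra.
  pose proof (cdf_mono F HF) as Fm; pose proof (cdf_le1 F HF) as F1; pose proof (cdf_ge0 F HF Hn) as F0.
  set (f := qdiff_density q F).
  assert (Hf : q_density q F f) by now apply qdiff_density_is_q_density.
  (* a = ln (1/q0) < b = ln (1/q); the growth exponent a/2 + (b - a)/4 is below b/2 *)
  set (a := ln (1 / q0)); set (eps := (- ln q - a) / 8).
  assert (Hla : a = - ln q0) by (unfold a, Rdiv; rewrite Rmult_1_l, ln_Rinv; lra).
  assert (Ha : 0 <= a).
  { rewrite Hla; destruct (Req_dec q0 1) as [->|]; [rewrite ln_1; lra|].
    enough (ln q0 < ln 1) by (rewrite ln_1 in *; lra); apply ln_increasing; lra. }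
  assert (Hab : a < - ln q) by (rewrite Hla; apply Ropp_lt_contravar, ln_increasing; lra).
  assert (Heps : 0 < eps) by (unfold eps; lra).
  destruct (Hls eps Heps) as [[N1 HN1] _].
  destruct (moment_bound_growth q mu (a / 2) eps N1 Hq1 ltac:(lra) Heps HN1) as [N0 HN0].
  exists f; split; [exact Hf|]; split.
  - intros n; destruct (q_moment_bound F Fm F1 F0 q n (mu n) Hq1 (Hmom n)) as (M & HM & _).
    exists M; now apply (q_moment_lattice q F f).
  - apply (lattice_determinacy q F f (2 + 1 / (/ q - 1)) (a / 2 + 2 * eps) (max N0 1) Hq1 HF Hf).
    + assert (1 < / q) by (rewrite <- Rinv_1; apply Rinv_lt_contravar; lra).
      assert (0 < 1 / (/ q - 1)) by (apply Rdiv_lt_0_compat; lra); lra.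
    + unfold eps; lra.
    + intros m M Hm HfM.
      destruct (q_moment_bound F Fm F1 F0 q m (mu m) Hq1 (Hmom m)) as (M' & HM' & Hbound).
      rewrite (sumZ_unique _ _ _ (proj1 (q_moment_lattice q F f m M Hq1 Hf) HfM) HM').
      eapply Rle_trans; [apply Hbound; lia | apply HN0; lia].
Qed.
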